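(* Let $\mathbf X=\{X_n\}$ and $\mathbf Y=\{Y_n\}$ be general sources such that $$\inf_{0<\epsilon<1}\ \liminf_{n\to\infty}\ \inf_{0\le\delta<1-\epsilon}\{c_n^x(\delta+\epsilon)-c_n^y(\delta)\}\ \ge 0 .$$ Then there exist joint pmfs $P_{X_nY_n}$ on $\mathcal X_n\times\mathcal Y_n$ with marginals $P_{X_n}$ and $P_{Y_n}$, for each $n$, such that for every $\gamma>0$ $$\lim_{n\to\infty}P_{X_nY_n}\Big\{\log\tfrac{1}{P_{X_n}(X_n)}-\log\tfrac{1}{P_{Y_n}(Y_n)}<-\gamma\Big\}=0 .$$ In other words, $\text{p-}\liminf_{n\to\infty}\{\log\frac{1}{P_{X_n}(X_n)}-\log\frac{1}{P_{Y_n}(Y_n)}\}\ge 0$ under $P_{X_nY_n}$.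
   Context: Logarithms are natural. A general source $\mathbf X=\{X_n\}_{n\ge1}$ is a sequence of random variables, $X_n$ taking values in a countable set $\mathcal X_n$, with no consistency requirements between different $n$. Similarly $Y_n$ takes values in a countable set $\mathcal Y_n$. For a random variable $Z$ on a countable set $\mathcal Z$ with pmf $P_Z$, list the elements of positive probability as $z_1,z_2,\dots$ (a finite or countably infinite list) with $P_Z(z_1)\ge P_Z(z_2)\ge\cdots$ (ties broken arbitrarily). Set $\delta_0=0$ and $\delta_k=\sum_{i\le k}P_Z(z_i)$. For $\delta\in[0,1)$ define $c^z(\delta)=\log\frac{1}{P_Z(z_k)}$, where $k$ is the unique index with $\delta\in[\delta_{k-1},\delta_k)$. Here $c_n^x$ and $c_n^y$ denote this function built from $P_{X_n}$ and from $P_{Y_n}$ respectively. *)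

From Stdlib Require Import Reals Lra ClassicalEpsilon.
Open Scope R_scope.

(* Alphabets: every countable set is encoded as (a subset of) nat;
   a pmf on a countable set is a nonnegative function nat -> R summing to 1. *)
Definition is_pmf (p : nat -> R) : Prop :=
  (forall x, 0 <= p x) /\ infinite_sum p 1.

(* Index range of a finite (Some m: indices 0..m-1) or infinite (None) list *)
Definition in_range (L : option nat) (k : nat) : Prop :=
  match L with None => True | Some m => (k < m)%nat end.

(* z (over range L) lists the elements of positive probability, each exactly once,
   in nonincreasing order of probability (ties broken arbitrarily).
   Indexing is 0-based: z 0 is the paper's z_1. *)
Definition sorted_listing (p : nat -> R) (L : option nat) (z : nat -> nat) : Prop :=
  (forall k, in_range L k -> 0 < p (z k)) /\
  (forall k k', in_range L k -> in_range L k' -> z k = z k' -> k = k') /\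
  (forall x, 0 < p x -> exists k, in_range L k /\ z k = x) /\
  (forall k, in_range L (S k) -> p (z (S k)) <= p (z k)).

Fixpoint psum (f : nat -> R) (k : nat) : R :=
  match k with O => 0 | S k' => psum f k' + f k' end.

(* v = c^z(delta): with delta_k = sum of the first k listed probabilities,
   v = log (1 / P(z_k)) for the unique k with delta in [delta_{k-1}, delta_k). *)
Definition c_val (p : nat -> R) (delta v : R) : Prop :=
  exists L z, sorted_listing p L z /\
    exists k, in_range L k /\
      psum (fun i => p (z i)) k <= delta < psum (fun i => p (z i)) (S k) /\
      v = ln (/ p (z k)).

(* c function (the value does not depend on tie breaking) *)
Definition cfun (p : nat -> R) (delta : R) : R :=
  epsilon (inhabits 0) (fun v => c_val p delta v).

Definition is_coupling (px py : nat -> R) (q : nat -> nat -> R) : Prop :=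
  (forall i j, 0 <= q i j) /\
  (forall i, infinite_sum (fun j => q i j) (px i)) /\
  (forall j, infinite_sum (fun i => q i j) (py j)).

Definition double_sum (f : nat -> nat -> R) (s : R) : Prop :=
  exists r : nat -> R,
    (forall i, infinite_sum (fun j => f i j) (r i)) /\ infinite_sum r s.

Definition event_prob (px py : nat -> R) (q : nat -> nat -> R) (gamma s : R) : Prop :=
  double_sum (fun i j =>
    if Rlt_dec (ln (/ px i) - ln (/ py j)) (- gamma) then q i j else 0) s.

From Stdlib Require Import Reals.
Open Scope R_scope.
From Stdlib Require Import Lra Lia List ClassicalEpsilon Classical.

(* List the elements of positive
   probability of [P_X] in nonincreasing order; the k-th one occupies the interval
   [I_k = [delta_k, delta_{k+1})] of [[0,1)], and [c^x(u)] is its information for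
   [u] in [I_k].  Do the same for [P_Y] with intervals [J_m].  For a shift
   [0 < e < 1], draw [U] uniformly in [[0,1)] and take [X] from the interval
   containing [U] and [Y] from the interval containing [U - e] mod 1.  Both marginals
   are right, and whenever [U >= e] the information difference is
   [c^x(U) - c^y(U - e) >= -eta] by the hypothesis at scale [(e, eta)]; so the event
   [{log 1/P_X(X) - log 1/P_Y(Y) < -gamma}] has probability at most [e] once
   [eta <= gamma].  Letting [e = eta] tend to 0 slowly enough (a diagonal argument)
   gives the theorem. *)

Lemma psum_ext (f g : nat -> R) (K : nat) :
  (forall i, f i = g i) -> psum f K = psum g K.
Proof. intro H; induction K; simpl; [lra | rewrite IHK, H; lra]. Qed.

Lemma psum_plus (f g : nat -> R) (K : nat) :
  psum (fun i => f i + g i) K = psum f K + psum g K.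
Proof. induction K; simpl; [lra | rewrite IHK; lra]. Qed.

Lemma psum_le (f g : nat -> R) (K : nat) :
  (forall i, f i <= g i) -> psum f K <= psum g K.
Proof. intro H; induction K; simpl; [lra|]. specialize (H K); lra. Qed.

Lemma psum_mono (f : nat -> R) (K K' : nat) :
  (forall i, 0 <= f i) -> (K <= K')%nat -> psum f K <= psum f K'.
Proof. intros H Hle; induction Hle; simpl; [lra|]. specialize (H m); lra. Qed.

Lemma psum_nonneg (f : nat -> R) (K : nat) : (forall i, 0 <= f i) -> 0 <= psum f K.
Proof. intros; apply (psum_mono f 0 K); auto; lia. Qed.

Lemma psum_lower (f : nat -> R) (t : R) (K : nat) :
  (forall j, t <= f j) -> INR K * t <= psum f K.
Proof. intro H; induction K; [simpl; lra|]. rewrite S_INR; simpl. specialize (H K); lra. Qed.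

Lemma sum_f_R0_psum (f : nat -> R) (n : nat) : sum_f_R0 f n = psum f (S n).
Proof. induction n; simpl; [lra|]. simpl in IHn; rewrite IHn; reflexivity. Qed.

Lemma psum_le_sum (f : nat -> R) (s : R) :
  (forall i, 0 <= f i) -> infinite_sum f s -> forall K, psum f K <= s.
Proof.
  intros Hf Hs K. destruct (Rle_dec (psum f K) s) as [?|Hn]; auto. exfalso.
  destruct (Hs (psum f K - s)) as [N HN]; [lra|].
  specialize (HN (Nat.max K N) ltac:(lia)). rewrite sum_f_R0_psum in HN.
  assert (psum f K <= psum f (S (Nat.max K N))) by (apply psum_mono; auto; lia).
  unfold R_dist, Rabs in HN. destruct Rcase_abs; lra.
Qed.

Lemma psum_near_sum (f : nat -> R) (s : R) :
  infinite_sum f s -> forall e, 0 < e -> exists K, psum f K > s - e.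
Proof.
  intros Hs e He. destruct (Hs e He) as [N HN]. exists (S N).
  specialize (HN N (le_n _)). rewrite sum_f_R0_psum in HN.
  unfold R_dist, Rabs in HN. destruct Rcase_abs; lra.
Qed.

Lemma sum_of_psum_bounds (g : nat -> R) (s : R) :
  (forall i, 0 <= g i) -> (forall K, psum g K <= s) ->
  (forall e, 0 < e -> exists K, psum g K > s - e) -> infinite_sum g s.
Proof.
  intros Hg Hb Ha e He. destruct (Ha e He) as [N HN]. exists N. intros n Hn.
  rewrite sum_f_R0_psum. assert (psum g N <= psum g (S n)) by (apply psum_mono; auto).
  specialize (Hb (S n)). unfold R_dist, Rabs. destruct Rcase_abs; lra.
Qed.

Lemma bounded_series_sum (g : nat -> R) (B : R) :
  (forall i, 0 <= g i) -> (forall K, psum g K <= B) ->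
  exists s, infinite_sum g s /\ s <= B.
Proof.
  intros Hg Hb. destruct (growing_cv (sum_f_R0 g)) as [l Hl].
  - intro n. simpl. specialize (Hg (S n)). lra.
  - exists B. intros x [n ->]. rewrite sum_f_R0_psum. auto.
  - exists l. split; [exact Hl|]. destruct (Rle_dec l B) as [?|Hn]; auto.
    destruct (Hl (l - B)) as [N HN]; [lra|]. specialize (HN N (le_n _)).
    rewrite sum_f_R0_psum in HN. specialize (Hb (S N)).
    unfold R_dist, Rabs in HN. destruct Rcase_abs; lra.
Qed.

Lemma sum_nonneg (f : nat -> R) (s : R) :
  (forall i, 0 <= f i) -> infinite_sum f s -> 0 <= s.
Proof.
  intros Hf Hs. exact (psum_le_sum f s Hf Hs 0).
Qed.

Lemma sum_ext (f g : nat -> R) (s : R) :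
  (forall i, f i = g i) -> infinite_sum f s -> infinite_sum g s.
Proof.
  intros H Hs e He. destruct (Hs e He) as [N HN]. exists N. intros n Hn.
  rewrite <- (sum_eq f g n) by auto. auto.
Qed.

Lemma sum_zero (g : nat -> R) : (forall i, g i = 0) -> infinite_sum g 0.
Proof.
  intro H. apply sum_of_psum_bounds.
  - intro i; rewrite H; lra.
  - intro K. rewrite (psum_ext g (fun _ => 0)) by auto. induction K; simpl; lra.
  - intros e He. exists 0%nat. simpl; lra.
Qed.

Lemma sum_transfer (f g : nat -> R) (s : R) :
  (forall i, 0 <= f i) -> (forall i, 0 <= g i) ->
  (forall N, exists M, psum g N <= psum f M) ->
  (forall M, exists N, psum f M <= psum g N) ->
  infinite_sum f s -> infinite_sum g s.
Proof.
  intros Hf Hg D1 D2 Hs. apply sum_of_psum_bounds; auto.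
  - intro N. destruct (D1 N) as [M HM]. pose proof (psum_le_sum f s Hf Hs M). lra.
  - intros e He. destruct (psum_near_sum f s Hs e He) as [M HM].
    destruct (D2 M) as [N HN]. exists N. lra.
Qed.

Lemma sum_lipschitz_image (u g : nat -> R) (F : R -> R) (s C : R) :
  0 <= C -> infinite_sum u s -> (forall K, psum g K = F (psum u K)) ->
  (forall y, Rabs (F y - F s) <= C * Rabs (y - s)) -> infinite_sum g (F s).
Proof.
  intros HC Hu HG HF e He.
  destruct (Hu (e / (C + 1))) as [N HN]; [apply Rdiv_lt_0_compat; lra|].
  exists N. intros n Hn. specialize (HN n Hn). unfold R_dist in *.
  rewrite sum_f_R0_psum in *. rewrite HG. specialize (HF (psum u (S n))).
  assert (C * Rabs (psum u (S n) - s) <= C * (e / (C + 1)))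
    by (apply Rmult_le_compat_l; lra).
  assert (C * (e / (C + 1)) < e).
  { unfold Rdiv. rewrite <- Rmult_assoc.
    apply (Rmult_lt_reg_r (C + 1)); [lra|].
    rewrite Rmult_assoc, Rinv_l by lra. nra. }
  lra.
Qed.

Fixpoint lsum (f : nat -> R) (l : list nat) : R :=
  match l with nil => 0 | x :: t => f x + lsum f t end.

Lemma lsum_app (f : nat -> R) (l1 l2 : list nat) :
  lsum f (l1 ++ l2) = lsum f l1 + lsum f l2.
Proof. induction l1; simpl; [lra | rewrite IHl1; lra]. Qed.

Lemma lsum_nonneg (f : nat -> R) (l : list nat) : (forall x, 0 <= f x) -> 0 <= lsum f l.
Proof. intro H; induction l; simpl; [lra|]. specialize (H a); lra. Qed.

Lemma psum_lsum (f : nat -> R) (K : nat) : psum f K = lsum f (seq 0 K).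
Proof. induction K; [reflexivity|]. rewrite seq_S, lsum_app. simpl. rewrite IHK; lra. Qed.

Lemma lsum_le_inj (F G : nat -> R) (phi : nat -> nat) (l1 l2 : list nat) :
  NoDup l1 -> (forall x, 0 <= G x) ->
  (forall x, In x l1 -> F x <> 0 -> In (phi x) l2 /\ G (phi x) = F x) ->
  (forall x y, In x l1 -> In y l1 -> F x <> 0 -> F y <> 0 -> phi x = phi y -> x = y) ->
  lsum F l1 <= lsum G l2.
Proof.
  revert l2; induction l1 as [|a l1 IH]; intros l2 Hnd HG H1 H2; simpl.
  - apply lsum_nonneg; auto.
  - inversion Hnd as [|a' l1' Hna Hnd']; subst.
    destruct (Req_dec (F a) 0) as [Ha|Ha].
    + rewrite Ha. assert (lsum F l1 <= lsum G l2).
      { apply IH; auto; intros; [apply H1 | apply H2]; simpl; auto. }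
      lra.
    + destruct (H1 a (or_introl eq_refl) Ha) as [Hin Heq].
      destruct (in_split _ _ Hin) as [l2a [l2b E]]. rewrite E, lsum_app. simpl.
      assert (lsum F l1 <= lsum G (l2a ++ l2b)).
      { apply IH; auto.
        - intros x Hx Fx. destruct (H1 x (or_intror Hx) Fx) as [Hx2 Gx]. split; auto.
          rewrite E in Hx2. apply in_app_or in Hx2. apply in_or_app.
          destruct Hx2 as [?|[Hx2|Hx2]]; auto.
          assert (x = a) by (apply H2; simpl; auto). subst; contradiction.
        - intros; apply H2; simpl; auto. }
      rewrite lsum_app in H. lra.
Qed.

Lemma list_bound (l : list nat) : exists M, forall x, In x l -> (x < M)%nat.
Proof.
  induction l as [|a l [M HM]]; [exists 0%nat; intros x []|].
  exists (S (Nat.max a M)). intros x [->|Hx]; [lia|]. specialize (HM x Hx); lia.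
Qed.

Definition in_rangeb (L : option nat) (k : nat) : bool :=
  match L with None => true | Some m => Nat.ltb k m end.

Lemma in_rangeb_spec (L : option nat) (k : nat) : in_rangeb L k = true <-> in_range L k.
Proof. destruct L; simpl; [apply Nat.ltb_lt | tauto]. Qed.

Lemma in_range_down (L : option nat) (k i : nat) : in_range L k -> (i <= k)%nat -> in_range L i.
Proof. destruct L; simpl; auto; lia. Qed.

Definition relist (h : nat -> R) (L : option nat) (z : nat -> nat) (m : nat) : R :=
  if in_rangeb L m then h (z m) else 0.

Lemma relist_nonneg (h : nat -> R) L z m : (forall x, 0 <= h x) -> 0 <= relist h L z m.
Proof. intros; unfold relist; destruct in_rangeb; auto; lra. Qed.

Definition inj_on (L : option nat) (z : nat -> nat) : Prop :=
  forall k k', in_range L k -> in_range L k' -> z k = z k' -> k = k'.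

Definition covers (h : nat -> R) (L : option nat) (z : nat -> nat) : Prop :=
  forall b, h b <> 0 -> exists k, in_range L k /\ z k = b.

Lemma relist_dominated (h : nat -> R) L z : (forall x, 0 <= h x) -> inj_on L z ->
  forall N, exists M, psum (relist h L z) N <= psum h M.
Proof.
  intros Hh Hinj N. destruct (list_bound (map z (seq 0 N))) as [M HM]. exists M.
  rewrite !psum_lsum. apply lsum_le_inj with (phi := z); [apply seq_NoDup | auto | |].
  - intros x Hx Hne. unfold relist in *. destruct (in_rangeb L x); [|contradiction].
    split; [|reflexivity]. apply in_seq. split; [lia|]. apply HM, in_map; auto.
  - intros x y _ _ Hx Hy Exy. unfold relist in *.
    destruct (in_rangeb L x) eqn:E1; [|contradiction].
    destruct (in_rangeb L y) eqn:E2; [|contradiction].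
    apply Hinj; try apply in_rangeb_spec; auto.
Qed.

Lemma relist_dominates (h : nat -> R) L z : (forall x, 0 <= h x) -> covers h L z ->
  forall M, exists N, psum h M <= psum (relist h L z) N.
Proof.
  intros Hh Hs M.
  destruct (choice (fun b k => h b <> 0 -> in_range L k /\ z k = b)) as [phi Hphi].
  { intro b. destruct (Req_dec (h b) 0) as [E|E].
    - exists 0%nat; contradiction.
    - destruct (Hs b E) as [k Hk]. exists k; auto. }
  destruct (list_bound (map phi (seq 0 M))) as [N HN]. exists N.
  rewrite !psum_lsum. apply lsum_le_inj with (phi := phi); [apply seq_NoDup | | |].
  - intros; apply relist_nonneg; auto.
  - intros x Hx Hne. destruct (Hphi x Hne) as [H1 H2]. split.
    + apply in_seq. split; [lia|]. apply HN, in_map; auto.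
    + unfold relist. apply in_rangeb_spec in H1. rewrite H1, H2; reflexivity.
  - intros x y _ _ Hx Hy Exy. destruct (Hphi x Hx) as [_ E1]. destruct (Hphi y Hy) as [_ E2].
    rewrite <- E1, <- E2, Exy; reflexivity.
Qed.

Lemma sum_relist (h : nat -> R) L z s : (forall x, 0 <= h x) -> inj_on L z -> covers h L z ->
  infinite_sum h s -> infinite_sum (relist h L z) s.
Proof.
  intros. apply sum_transfer with h; auto; [intros; apply relist_nonneg; auto | |].
  - apply relist_dominated; auto.
  - apply relist_dominates; auto.
Qed.

Lemma sum_of_relist (h : nat -> R) L z s : (forall x, 0 <= h x) -> inj_on L z -> covers h L z ->
  infinite_sum (relist h L z) s -> infinite_sum h s.
Proof.
  intros. apply sum_transfer with (relist h L z); auto; [intros; apply relist_nonneg; auto | |].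
  - apply relist_dominates; auto.
  - apply relist_dominated; auto.
Qed.

(** * Every pmf admits a sorted listing *)

(* The listing is built greedily: at each step pick a heaviest element of positive
   probability not yet listed.  Such a maximum exists because the terms of a
   convergent series become small. *)

Lemma pmf_terms_small (p : nat -> R) : is_pmf p ->
  forall t, 0 < t -> exists B, forall x, (B <= x)%nat -> p x < t.
Proof.
  intros [Hp Hs] t Ht. destruct (Hs (t / 2)) as [N HN]; [lra|]. exists (S N).
  intros [|y] Hy; [lia|].
  pose proof (HN y ltac:(lia)) as H1. pose proof (HN (S y) ltac:(lia)) as H2.
  simpl in H2. unfold R_dist, Rabs in *. do 2 destruct Rcase_abs; lra.
Qed.

Lemma finite_argmax (C : nat -> Prop) (p : nat -> R) (B : nat) :
  (exists x, (x < B)%nat /\ C x) ->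
  exists x, (x < B)%nat /\ C x /\ forall y, (y < B)%nat -> C y -> p y <= p x.
Proof.
  induction B as [|B IH]; intros [x0 [Hx0 Cx0]]; [lia|].
  destruct (classic (exists x, (x < B)%nat /\ C x)) as [Hex|Hnex].
  - destruct (IH Hex) as [x [Hx [Cx Hm]]].
    destruct (classic (C B /\ p x < p B)) as [[CB Hlt]|HB].
    + exists B. repeat split; auto. intros y Hy Cy.
      destruct (Nat.eq_dec y B); [subst; lra|]. specialize (Hm y ltac:(lia) Cy); lra.
    + exists x. repeat split; auto. intros y Hy Cy.
      destruct (Nat.eq_dec y B); [|apply Hm; auto; lia].
      subst. apply Rnot_lt_le. intro; apply HB; auto.
  - exists x0. repeat split; auto. intros y Hy Cy.
    destruct (Nat.eq_dec y x0); [subst; lra|].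
    exfalso; apply Hnex; exists y; split; auto.
    destruct (Nat.eq_dec y B); [|lia]. subst.
    exfalso; apply Hnex; exists x0; split; auto. lia.
Qed.

Definition unlisted (p : nat -> R) (l : list nat) (x : nat) : Prop := 0 < p x /\ ~ In x l.

Definition heaviest_unlisted (p : nat -> R) (l : list nat) (x : nat) : Prop :=
  unlisted p l x /\ forall y, unlisted p l y -> p y <= p x.

Lemma heaviest_unlisted_exists (p : nat -> R) (l : list nat) : is_pmf p ->
  (exists x, unlisted p l x) -> exists x, heaviest_unlisted p l x.
Proof.
  intros Hp [x0 Hx0]. destruct (pmf_terms_small p Hp (p x0) (proj1 Hx0)) as [B HB].
  destruct (finite_argmax (unlisted p l) p (Nat.max B (S x0))) as [x [Hx [Cx Hm]]].
  { exists x0; split; auto; lia. }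
  exists x; split; auto. intros y Cy. destruct (Nat.lt_ge_cases y (Nat.max B (S x0))).
  - apply Hm; auto.
  - pose proof (HB y ltac:(lia)). pose proof (Hm x0 ltac:(lia) Hx0). lra.
Qed.

Definition greedy_step_spec (p : nat -> R) (l : list nat) (o : option nat) : Prop :=
  match o with
  | Some x => heaviest_unlisted p l x
  | None => ~ exists x, unlisted p l x
  end.

Definition greedy_step (p : nat -> R) (l : list nat) : option nat :=
  epsilon (inhabits None) (greedy_step_spec p l).

Fixpoint greedy_prefix (p : nat -> R) (n : nat) : list nat :=
  match n with
  | O => nil
  | S n' => match greedy_step p (greedy_prefix p n') with
            | Some x => greedy_prefix p n' ++ x :: nil
            | None => greedy_prefix p n'
            end
  end.

Definition greedy (p : nat -> R) (k : nat) : nat :=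
  match greedy_step p (greedy_prefix p k) with Some x => x | None => 0%nat end.

Definition greedy_defined (p : nat -> R) (k : nat) : Prop :=
  greedy_step p (greedy_prefix p k) <> None.

Section Greedy.

Variable p : nat -> R.
Hypothesis Hp : is_pmf p.

Lemma greedy_step_correct (l : list nat) : greedy_step_spec p l (greedy_step p l).
Proof.
  unfold greedy_step. apply epsilon_spec.
  destruct (classic (exists x, unlisted p l x)) as [H|H].
  - destruct (heaviest_unlisted_exists p l Hp H) as [x Hx]. exists (Some x); exact Hx.
  - exists None; exact H.
Qed.

Lemma greedy_defined_down (k i : nat) : greedy_defined p k -> (i <= k)%nat -> greedy_defined p i.
Proof.
  intros H Hle. induction Hle as [|k Hle IH]; auto. apply IH.
  intro Hn. apply H. simpl. rewrite Hn. exact Hn.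
Qed.

Lemma greedy_prefix_map (k : nat) : (forall i, (i < k)%nat -> greedy_defined p i) ->
  greedy_prefix p k = map (greedy p) (seq 0 k).
Proof.
  induction k as [|k IH]; intro H; [reflexivity|].
  rewrite seq_S, map_app. simpl. rewrite <- IH by (intros; apply H; lia).
  assert (Hd := H k ltac:(lia)). unfold greedy_defined, greedy in *.
  destruct (greedy_step p (greedy_prefix p k)); [reflexivity | congruence].
Qed.

Lemma greedy_heaviest (k : nat) : greedy_defined p k ->
  heaviest_unlisted p (greedy_prefix p k) (greedy p k).
Proof.
  intro Hd. pose proof (greedy_step_correct (greedy_prefix p k)).
  unfold greedy_defined, greedy in *.
  destruct (greedy_step p (greedy_prefix p k)); [exact H | congruence].
Qed.

Lemma greedy_in_prefix (k i : nat) : greedy_defined p k -> (i < k)%nat ->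
  In (greedy p i) (greedy_prefix p k).
Proof.
  intros Hd Hi. rewrite greedy_prefix_map.
  - apply in_map, in_seq; lia.
  - intros j Hj. apply (greedy_defined_down k); auto; lia.
Qed.

Lemma greedy_inj (k k' : nat) : greedy_defined p k -> greedy_defined p k' ->
  greedy p k = greedy p k' -> k = k'.
Proof.
  intros Hk Hk' E. destruct (Nat.lt_total k k') as [Hl|[Hl|Hl]]; auto; exfalso.
  - apply (proj2 (proj1 (greedy_heaviest k' Hk'))). rewrite <- E. apply greedy_in_prefix; auto.
  - apply (proj2 (proj1 (greedy_heaviest k Hk))). rewrite E. apply greedy_in_prefix; auto.
Qed.

Lemma greedy_sorted (k : nat) : greedy_defined p (S k) -> p (greedy p (S k)) <= p (greedy p k).
Proof.
  intro Hk. pose proof (greedy_defined_down (S k) k Hk ltac:(lia)) as Hk0.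
  destruct (greedy_heaviest (S k) Hk) as [[H1 H2] _].
  apply (proj2 (greedy_heaviest k Hk0)). split; auto. intro Hin. apply H2.
  simpl. destruct (greedy_step p (greedy_prefix p k)); [apply in_or_app; auto | exact Hin].
Qed.

(* If the greedy process never stops, it still lists every [x] of positive probability:
   otherwise infinitely many listed elements would each weigh at least [p x]. *)
Lemma greedy_covers_infinite : (forall k, greedy_defined p k) ->
  forall x, 0 < p x -> exists k, greedy p k = x.
Proof.
  intros Hall x Hx. apply NNPP. intro Hne.
  assert (Hge : forall k, p x <= p (greedy p k)).
  { intro k. apply (greedy_heaviest k (Hall k)). split; auto. intro Hin.
    rewrite greedy_prefix_map in Hin by auto. apply in_map_iff in Hin.
    destruct Hin as [i [Ei _]]. apply Hne. exists i; exact Ei. }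
  destruct (INR_archimed (p x) 1 Hx) as [K HK].
  destruct (relist_dominated p None (greedy p) (proj1 Hp)
              (fun k k' _ _ => greedy_inj k k' (Hall k) (Hall k')) K) as [M HM].
  pose proof (psum_lower (relist p None (greedy p)) (p x) K Hge).
  pose proof (psum_le_sum p 1 (proj1 Hp) (proj2 Hp) M). lra.
Qed.

Lemma greedy_covers_finite (m : nat) : ~ greedy_defined p m ->
  (forall k, (k < m)%nat -> greedy_defined p k) ->
  forall x, 0 < p x -> exists k, (k < m)%nat /\ greedy p k = x.
Proof.
  intros Hnm Hbel x Hx. apply NNPP. intro Hne. apply Hnm. intro Hn.
  pose proof (greedy_step_correct (greedy_prefix p m)) as Hsp. rewrite Hn in Hsp.
  apply Hsp. exists x. split; auto. intro Hin.
  rewrite greedy_prefix_map in Hin by auto.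
  apply in_map_iff in Hin. destruct Hin as [i [Ei Hi]]. apply in_seq in Hi.
  apply Hne. exists i; split; [lia | exact Ei].
Qed.

End Greedy.

Lemma listing_exists (p : nat -> R) : is_pmf p -> exists L z, sorted_listing p L z.
Proof.
  intro Hp. destruct (classic (forall k, greedy_defined p k)) as [Hall|Hnall].
  - exists None, (greedy p). split; [|split; [|split]].
    + intros k _. apply (greedy_heaviest p Hp k (Hall k)).
    + intros k k' _ _. apply greedy_inj; auto.
    + intros x Hx. destruct (greedy_covers_infinite p Hp Hall x Hx) as [k Hk].
      exists k; split; [exact I | exact Hk].
    + intros k _. apply greedy_sorted; auto.
  - assert (Hm : exists m, ~ greedy_defined p m /\ forall k, (k < m)%nat -> greedy_defined p k).
    { apply not_all_ex_not in Hnall. destruct Hnall as [m0 Hm0].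
      induction m0 as [|m0 IH]; [exists 0%nat; split; auto; intros; lia|].
      destruct (classic (greedy_defined p m0)) as [Hd|Hd]; auto.
      exists (S m0); split; auto. intros k Hk. apply (greedy_defined_down p m0); auto; lia. }
    destruct Hm as [m [Hnm Hbel]].
    exists (Some m), (greedy p). simpl. split; [|split; [|split]].
    + intros k Hk. apply (greedy_heaviest p Hp k (Hbel k Hk)).
    + intros k k' Hk Hk'. apply greedy_inj; auto.
    + apply (greedy_covers_finite p Hp m Hnm Hbel).
    + intros k Hk. apply greedy_sorted; auto.
Qed.

(* [cum p L z k] is the paper's [delta_k]: the mass of the first [k] listed elements;
   the [k]-th listed element occupies the interval [[cum k, cum (S k))]. *)
Definition cum (p : nat -> R) (L : option nat) (z : nat -> nat) (k : nat) : R :=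
  psum (relist p L z) k.

(* The position of [x] in the listing [z] (meaningful when [x] is listed). *)
Definition position (L : option nat) (z : nat -> nat) (x : nat) : nat :=
  epsilon (inhabits 0%nat) (fun k => in_range L k /\ z k = x).

Section Listing.

Variables (p : nat -> R) (L : option nat) (z : nat -> nat).
Hypotheses (Hp : is_pmf p) (SL : sorted_listing p L z).

Lemma listing_inj : inj_on L z.
Proof. exact (proj1 (proj2 SL)). Qed.

Lemma listing_covers : covers p L z.
Proof. intros b Hb. apply SL. pose proof (proj1 Hp b). lra. Qed.

Lemma listing_total : infinite_sum (relist p L z) 1.
Proof. apply sum_relist; [apply Hp | apply listing_inj | apply listing_covers | apply Hp]. Qed.

Lemma listing_mono (k i : nat) : in_range L k -> (i <= k)%nat -> p (z k) <= p (z i).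
Proof.
  intros Hk Hle. induction Hle as [|k Hle IH]; [lra|].
  pose proof (proj2 (proj2 (proj2 SL)) k Hk).
  specialize (IH (in_range_down L (S k) k Hk ltac:(lia))). lra.
Qed.

Lemma position_spec (x : nat) : 0 < p x -> in_range L (position L z x) /\ z (position L z x) = x.
Proof.
  intro Hx. unfold position. apply (epsilon_spec (inhabits 0%nat) (fun k => in_range L k /\ z k = x)).
  apply SL; auto.
Qed.

Lemma position_listed (k : nat) : in_range L k -> position L z (z k) = k.
Proof.
  intro Hk. destruct (position_spec (z k) (proj1 SL k Hk)) as [H1 H2].
  apply listing_inj; auto.
Qed.

Lemma relist_position (x : nat) : 0 < p x -> relist p L z (position L z x) = p x.
Proof.
  intro Hx. destruct (position_spec x Hx) as [H1 H2]. unfold relist.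
  apply in_rangeb_spec in H1. rewrite H1, H2; reflexivity.
Qed.

Lemma cum_S (k : nat) : cum p L z (S k) = cum p L z k + relist p L z k.
Proof. reflexivity. Qed.

Lemma cum_mono (k : nat) : cum p L z k <= cum p L z (S k).
Proof. rewrite cum_S. pose proof (relist_nonneg p L z k (proj1 Hp)). lra. Qed.

Lemma cum_nonneg (k : nat) : 0 <= cum p L z k.
Proof. apply psum_nonneg. intro; apply relist_nonneg, Hp. Qed.

Lemma cum_le1 (k : nat) : cum p L z k <= 1.
Proof. apply psum_le_sum; [intro; apply relist_nonneg, Hp | apply listing_total]. Qed.

Lemma cum_unlisted (k : nat) : ~ in_range L k -> cum p L z (S k) = cum p L z k.
Proof.
  intro Hk. rewrite cum_S. unfold relist.
  destruct (in_rangeb L k) eqn:E; [apply in_rangeb_spec in E; contradiction | lra].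
Qed.

Lemma c_val_at (k : nat) (u : R) : cum p L z k <= u < cum p L z (S k) ->
  c_val p u (ln (/ p (z k))).
Proof.
  intro Hu. rewrite cum_S in Hu.
  assert (Hk : in_range L k).
  { apply in_rangeb_spec. unfold relist in Hu. destruct (in_rangeb L k); auto; lra. }
  assert (Hpre : forall j, (j <= S k)%nat -> psum (fun i => p (z i)) j = cum p L z j).
  { induction j as [|j IH]; intro Hj; [reflexivity|].
    simpl. rewrite IH by lia. unfold cum, relist. simpl.
    replace (in_rangeb L j) with true; [reflexivity|].
    symmetry; apply in_rangeb_spec. apply (in_range_down L k); auto; lia. }
  exists L, z. split; auto. exists k. split; auto.
  rewrite !Hpre by lia. rewrite cum_S. split; [lra | reflexivity].
Qed.

End Listing.

Lemma heavier_prefix_before (p : nat -> R) L z L' w (k m : nat) :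
  is_pmf p -> sorted_listing p L z -> sorted_listing p L' w ->
  in_range L k -> p (w m) < p (z k) ->
  psum (fun i => p (z i)) (S k) <= psum (fun i => p (w i)) m.
Proof.
  intros Hp SL1 SL2 Hk Hlt. rewrite !psum_lsum.
  apply lsum_le_inj with (phi := fun i => position L' w (z i));
    [apply seq_NoDup | intro; apply Hp | |].
  - intros x Hx _. apply in_seq in Hx.
    assert (Hxr : in_range L x) by (apply (in_range_down L k); auto; lia).
    destruct (position_spec p L' w SL2 (z x) (proj1 SL1 x Hxr)) as [H1 H2].
    rewrite H2. split; [|reflexivity].
    apply in_seq. split; [lia|]. simpl.
    destruct (Nat.lt_ge_cases (position L' w (z x)) m) as [?|Hge]; auto. exfalso.
    pose proof (listing_mono p L' w SL2 _ m H1 Hge) as Hw. rewrite H2 in Hw.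
    pose proof (listing_mono p L z SL1 k x Hk ltac:(lia)). lra.
  - intros x y Hx Hy _ _ E. apply in_seq in Hx. apply in_seq in Hy.
    assert (Hxr : in_range L x) by (apply (in_range_down L k); auto; lia).
    assert (Hyr : in_range L y) by (apply (in_range_down L k); auto; lia).
    destruct (position_spec p L' w SL2 (z x) (proj1 SL1 x Hxr)) as [_ H1].
    destruct (position_spec p L' w SL2 (z y) (proj1 SL1 y Hyr)) as [_ H2].
    apply (listing_inj p L z SL1); auto. rewrite <- H1, <- H2, E; reflexivity.
Qed.

Lemma c_val_unique (p : nat -> R) (d v1 v2 : R) : is_pmf p ->
  c_val p d v1 -> c_val p d v2 -> v1 = v2.
Proof.
  intros Hp [L [z [SL1 [k [Hk [[H1 H2] E1]]]]]] [L' [w [SL2 [m [Hm [[H3 H4] E2]]]]]].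
  subst. do 2 f_equal.
  destruct (Rtotal_order (p (z k)) (p (w m))) as [Hl|[He|Hl]]; auto; exfalso.
  - pose proof (heavier_prefix_before p L' w L z m k Hp SL2 SL1 Hm Hl). lra.
  - pose proof (heavier_prefix_before p L z L' w k m Hp SL1 SL2 Hk Hl). lra.
Qed.

Lemma cfun_at (p : nat -> R) L z (x : nat) (u : R) : is_pmf p -> sorted_listing p L z -> 0 < p x ->
  cum p L z (position L z x) <= u < cum p L z (S (position L z x)) ->
  cfun p u = ln (/ p x).
Proof.
  intros Hp SL Hx Hu. pose proof (c_val_at p L z SL _ u Hu) as Hc.
  rewrite (proj2 (position_spec p L z SL x Hx)) in Hc.
  apply (c_val_unique p u); auto. unfold cfun. apply epsilon_spec. eauto.
Qed.

(** * Lengths of intersections of intervals *)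

Definition ov (a1 a2 b1 b2 : R) : R := Rmax 0 (Rmin a2 b2 - Rmax a1 b1).

Ltac minmax_lra := repeat match goal with
 | |- context [Rmax ?a ?b] => let H := fresh in destruct (Rle_lt_dec a b) as [H|H];
      [rewrite (Rmax_right a b) in * by lra | rewrite (Rmax_left a b) in * by lra];
      try (exfalso; lra)
 | |- context [Rmin ?a ?b] => let H := fresh in destruct (Rle_lt_dec a b) as [H|H];
      [rewrite (Rmin_left a b) in * by lra | rewrite (Rmin_right a b) in * by lra];
      try (exfalso; lra)
 | |- context [Rabs ?a] => let H := fresh in destruct (Rle_lt_dec 0 a) as [H|H];
      [rewrite (Rabs_right a) in * by lra | rewrite (Rabs_left a) in * by lra];
      try (exfalso; lra)
 | _ : context [Rmax ?a ?b] |- _ => let H := fresh in destruct (Rle_lt_dec a b) as [H|H];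
      [rewrite (Rmax_right a b) in * by lra | rewrite (Rmax_left a b) in * by lra];
      try (exfalso; lra)
 | _ : context [Rmin ?a ?b] |- _ => let H := fresh in destruct (Rle_lt_dec a b) as [H|H];
      [rewrite (Rmin_left a b) in * by lra | rewrite (Rmin_right a b) in * by lra];
      try (exfalso; lra)
 end; lra.

Lemma ov_nonneg (a1 a2 b1 b2 : R) : 0 <= ov a1 a2 b1 b2.
Proof. apply Rmax_l. Qed.

Lemma ov_sym (a1 a2 b1 b2 : R) : ov a1 a2 b1 b2 = ov b1 b2 a1 a2.
Proof. unfold ov. rewrite (Rmin_comm a2 b2), (Rmax_comm a1 b1). reflexivity. Qed.

Lemma ov_empty (a1 a2 b : R) : ov a1 a2 b b = 0.
Proof. unfold ov. minmax_lra. Qed.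

Lemma ov_split (a1 a2 b c d : R) : b <= c -> c <= d ->
  ov a1 a2 b c + ov a1 a2 c d = ov a1 a2 b d.
Proof. intros. unfold ov. minmax_lra. Qed.

Lemma ov_mono (a1 a2 b d d' : R) : d <= d' -> ov a1 a2 b d <= ov a1 a2 b d'.
Proof. intros. unfold ov. minmax_lra. Qed.

Lemma ov_lip (a1 a2 b c c' : R) : Rabs (ov a1 a2 b c - ov a1 a2 b c') <= Rabs (c - c').
Proof. unfold ov. minmax_lra. Qed.

Lemma ov_lip_left (a x y c d : R) : Rabs (ov a x c d - ov a y c d) <= Rabs (x - y).
Proof. rewrite (ov_sym a x), (ov_sym a y). apply ov_lip. Qed.

Lemma ov_tile (a1 a2 : R) (T : nat -> R) (M : nat) : (forall m, T m <= T (S m)) ->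
  psum (fun m => ov a1 a2 (T m) (T (S m))) M = ov a1 a2 (T 0%nat) (T M).
Proof.
  intro HT. induction M as [|M IH]; simpl; [rewrite ov_empty; reflexivity|].
  rewrite IH. apply ov_split; auto.
  clear IH; induction M; [lra|]. specialize (HT M); lra.
Qed.

Lemma ov_tile_left (T : nat -> R) (b1 b2 : R) (K : nat) : (forall k, T k <= T (S k)) ->
  psum (fun k => ov (T k) (T (S k)) b1 b2) K = ov (T 0%nat) (T K) b1 b2.
Proof.
  intro HT. rewrite (psum_ext _ (fun k => ov b1 b2 (T k) (T (S k)))) by (intro; apply ov_sym).
  rewrite ov_tile by auto. apply ov_sym.
Qed.

Lemma ov_pos_point (a1 a2 b1 b2 : R) : 0 < ov a1 a2 b1 b2 ->
  a1 <= Rmax a1 b1 < a2 /\ b1 <= Rmax a1 b1 < b2.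
Proof. unfold ov. intro H. split; split; try apply Rmax_l; try apply Rmax_r; minmax_lra. Qed.

Lemma shifted_cover_row (x1 x2 e : R) : 0 <= x1 <= x2 -> x2 <= 1 -> 0 < e < 1 ->
  ov x1 x2 (0 + e) (1 + e) + ov x1 x2 (0 + (e - 1)) (1 + (e - 1)) = x2 - x1.
Proof. intros. unfold ov. minmax_lra. Qed.

Lemma shifted_cover_col (y1 y2 e : R) : 0 <= y1 <= y2 -> y2 <= 1 -> 0 < e < 1 ->
  ov 0 1 (y1 + e) (y2 + e) + ov 0 1 (y1 + (e - 1)) (y2 + (e - 1)) = y2 - y1.
Proof. intros. unfold ov. minmax_lra. Qed.

Lemma ov_wrap_bound (x e : R) : 0 <= e -> ov 0 x (e - 1) e <= e.
Proof. intros. unfold ov. minmax_lra. Qed.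

(** * The shifted quantile coupling *)

(* With [U] uniform on [[0,1)], let [X] be the element whose interval for [px]
   contains [U], and [Y] the element whose interval for [py] contains [U - e]
   taken mod 1.  The cell of listed positions [(k, m)] gets the length of
   [I_k ∩ (J_m + e)] (direct part) plus that of [I_k ∩ (J_m + e - 1)]
   (wrapped part), with [I_k], [J_m] the listing intervals of [px], [py]. *)

(* The hypothesis of the theorem at scale [(e, eta)] for one pair of pmfs. *)
Definition shift_dominates (px py : nat -> R) (e eta : R) : Prop :=
  forall delta, 0 <= delta < 1 - e -> cfun px (delta + e) - cfun py delta >= - eta.

Section ShiftedCoupling.

Variables (px py : nat -> R) (Lx Ly : option nat) (zx zy : nat -> nat) (e : R).
Hypotheses (Hx : is_pmf px) (Hy : is_pmf py)
  (SLx : sorted_listing px Lx zx) (SLy : sorted_listing py Ly zy) (He : 0 < e < 1).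

Local Notation X := (cum px Lx zx).
Local Notation Y := (cum py Ly zy).

Definition direct_part (k m : nat) : R := ov (X k) (X (S k)) (Y m + e) (Y (S m) + e).
Definition wrapped_part (k m : nat) : R :=
  ov (X k) (X (S k)) (Y m + (e - 1)) (Y (S m) + (e - 1)).

(* Transport a function of listing positions to the original alphabets. *)
Definition on_support (f : nat -> nat -> R) (a b : nat) : R :=
  if Rlt_dec 0 (px a) then
    if Rlt_dec 0 (py b) then f (position Lx zx a) (position Ly zy b) else 0
  else 0.

Definition shifted_coupling : nat -> nat -> R :=
  on_support (fun k m => direct_part k m + wrapped_part k m).

Lemma on_support_nonneg (f : nat -> nat -> R) (a b : nat) :
  (forall k m, 0 <= f k m) -> 0 <= on_support f a b.
Proof. intro Hf. unfold on_support. repeat destruct Rlt_dec; auto; lra. Qed.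

Lemma shifted_coupling_nonneg (a b : nat) : 0 <= shifted_coupling a b.
Proof.
  apply on_support_nonneg. intros. pose proof (ov_nonneg (X k) (X (S k)) (Y m + e) (Y (S m) + e)).
  pose proof (ov_nonneg (X k) (X (S k)) (Y m + (e - 1)) (Y (S m) + (e - 1))).
  unfold direct_part, wrapped_part; lra.
Qed.

Lemma on_support_row (f : nat -> nat -> R) (a m : nat) : 0 < px a ->
  (forall m', ~ in_range Ly m' -> f (position Lx zx a) m' = 0) ->
  relist (on_support f a) Ly zy m = f (position Lx zx a) m.
Proof.
  intros Ha Hf. unfold relist, on_support. destruct (in_rangeb Ly m) eqn:E.
  - apply in_rangeb_spec in E. pose proof (proj1 SLy m E).
    destruct Rlt_dec; [|contradiction]. destruct Rlt_dec; [|contradiction].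
    rewrite (position_listed py Ly zy SLy m E). reflexivity.
  - symmetry; apply Hf. intro Hm. apply in_rangeb_spec in Hm. congruence.
Qed.

Lemma on_support_col (f : nat -> nat -> R) (b k : nat) : 0 < py b ->
  (forall k', ~ in_range Lx k' -> f k' (position Ly zy b) = 0) ->
  relist (fun a => on_support f a b) Lx zx k = f k (position Ly zy b).
Proof.
  intros Hb Hf. unfold relist, on_support. destruct (in_rangeb Lx k) eqn:E.
  - apply in_rangeb_spec in E. pose proof (proj1 SLx k E).
    destruct Rlt_dec; [|contradiction]. destruct Rlt_dec; [|contradiction].
    rewrite (position_listed px Lx zx SLx k E). reflexivity.
  - symmetry; apply Hf. intro Hk. apply in_rangeb_spec in Hk. congruence.
Qed.

Lemma on_support_covers_row (f : nat -> nat -> R) (a : nat) : covers (on_support f a) Ly zy.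
Proof.
  intros b Hb. apply (listing_covers py Ly zy Hy SLy). unfold on_support in Hb.
  destruct Rlt_dec; [|now elim Hb]. destruct (Rlt_dec 0 (py b)); [lra | now elim Hb].
Qed.

Lemma on_support_covers_col (f : nat -> nat -> R) (b : nat) :
  covers (fun a => on_support f a b) Lx zx.
Proof.
  intros a Ha. apply (listing_covers px Lx zx Hx SLx). unfold on_support in Ha.
  destruct (Rlt_dec 0 (px a)); [lra | now elim Ha].
Qed.

Lemma Y_mono_shift (c : R) (m : nat) : Y m + c <= Y (S m) + c.
Proof. pose proof (cum_mono py Ly zy Hy m). lra. Qed.

(* Row [k] of cells: the intervals [J_m + e] and [J_m + e - 1] tile [[e-1, 1+e)],
   which contains [I_k]; so the row sums to the length [px a] of [I_k]. *)
Lemma cell_row_sum (a : nat) : 0 < px a ->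
  infinite_sum (fun m => direct_part (position Lx zx a) m + wrapped_part (position Lx zx a) m) (px a).
Proof.
  intro Ha. set (k := position Lx zx a).
  set (F := fun y => ov (X k) (X (S k)) (0 + e) (y + e) + ov (X k) (X (S k)) (0 + (e - 1)) (y + (e - 1))).
  assert (HF1 : F 1 = px a).
  { unfold F. rewrite shifted_cover_row; auto.
    - rewrite cum_S. unfold k. rewrite (relist_position px Lx zx SLx a Ha). ring.
    - split; [apply cum_nonneg | apply cum_mono]; auto.
    - apply cum_le1; auto. }
  rewrite <- HF1. apply (sum_lipschitz_image (relist py Ly zy) _ F 1 2); [lra | apply listing_total; auto | |].
  - intro M. rewrite psum_plus. unfold direct_part, wrapped_part.
    rewrite (ov_tile _ _ (fun m => Y m + e)), (ov_tile _ _ (fun m => Y m + (e - 1)))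
      by apply Y_mono_shift. reflexivity.
  - intro y. unfold F.
    pose proof (ov_lip (X k) (X (S k)) (0 + e) (y + e) (1 + e)) as L1.
    pose proof (ov_lip (X k) (X (S k)) (0 + (e - 1)) (y + (e - 1)) (1 + (e - 1))) as L2.
    replace (y + e - (1 + e)) with (y - 1) in L1 by ring.
    replace (y + (e - 1) - (1 + (e - 1))) with (y - 1) in L2 by ring.
    revert L1 L2. generalize (ov (X k) (X (S k)) (0 + e) (y + e)), (ov (X k) (X (S k)) (0 + e) (1 + e)),
      (ov (X k) (X (S k)) (0 + (e - 1)) (y + (e - 1))), (ov (X k) (X (S k)) (0 + (e - 1)) (1 + (e - 1))).
    intros. unfold Rabs in *. repeat destruct Rcase_abs; lra.
Qed.

(* Column [m] of cells: the intervals [I_k] tile [[0,1)], and the two translates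
   of [J_m] meet [[0,1)] in total length [py b]. *)
Lemma cell_col_sum (b : nat) : 0 < py b ->
  infinite_sum (fun k => direct_part k (position Ly zy b) + wrapped_part k (position Ly zy b)) (py b).
Proof.
  intro Hb. set (m := position Ly zy b).
  set (G := fun x => ov 0 x (Y m + e) (Y (S m) + e) + ov 0 x (Y m + (e - 1)) (Y (S m) + (e - 1))).
  assert (HG1 : G 1 = py b).
  { unfold G. rewrite shifted_cover_col; auto.
    - rewrite cum_S. unfold m. rewrite (relist_position py Ly zy SLy b Hb). ring.
    - split; [apply cum_nonneg | apply cum_mono]; auto.
    - apply cum_le1; auto. }
  rewrite <- HG1. apply (sum_lipschitz_image (relist px Lx zx) _ G 1 2); [lra | apply listing_total; auto | |].
  - intro K. rewrite psum_plus. unfold direct_part, wrapped_part.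
    rewrite !(ov_tile_left X) by apply (cum_mono px Lx zx Hx). reflexivity.
  - intro x. unfold G.
    pose proof (ov_lip_left 0 x 1 (Y m + e) (Y (S m) + e)) as L1.
    pose proof (ov_lip_left 0 x 1 (Y m + (e - 1)) (Y (S m) + (e - 1))) as L2.
    revert L1 L2. generalize (ov 0 x (Y m + e) (Y (S m) + e)), (ov 0 1 (Y m + e) (Y (S m) + e)),
      (ov 0 x (Y m + (e - 1)) (Y (S m) + (e - 1))), (ov 0 1 (Y m + (e - 1)) (Y (S m) + (e - 1))).
    intros. unfold Rabs in *. repeat destruct Rcase_abs; lra.
Qed.

Theorem shifted_coupling_is_coupling : is_coupling px py shifted_coupling.
Proof.
  split; [|split]; [exact shifted_coupling_nonneg | intro a | intro b].
  - destruct (Rlt_dec 0 (px a)) as [Ha|Ha].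
    + apply sum_of_relist with Ly zy;
        [intro; apply shifted_coupling_nonneg | apply (listing_inj py Ly zy SLy)
        | apply on_support_covers_row |].
      apply sum_ext with (2 := cell_row_sum a Ha). intro m. symmetry. apply on_support_row; auto.
      intros m' Hm'. unfold direct_part, wrapped_part.
      rewrite (cum_unlisted py Ly zy m' Hm'), !ov_empty. ring.
    + replace (px a) with 0 by (pose proof (proj1 Hx a); lra).
      apply sum_zero. intro b. unfold shifted_coupling, on_support.
      destruct Rlt_dec; [contradiction | reflexivity].
  - destruct (Rlt_dec 0 (py b)) as [Hb|Hb].
    + apply sum_of_relist with Lx zx;
        [intro; apply shifted_coupling_nonneg | apply (listing_inj px Lx zx SLx)
        | apply on_support_covers_col |].
      apply sum_ext with (2 := cell_col_sum b Hb). intro k. symmetry. apply on_support_col; auto.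
      intros k' Hk'. unfold direct_part, wrapped_part.
      rewrite (cum_unlisted px Lx zx k' Hk'), !(ov_sym (X k')), !ov_empty. ring.
    + replace (py b) with 0 by (pose proof (proj1 Hy b); lra).
      apply sum_zero. intro a. unfold shifted_coupling, on_support.
      destruct Rlt_dec; [|reflexivity]. destruct Rlt_dec; [contradiction | reflexivity].
Qed.


(** * Under the hypothesis, the event lives in the wrapped part *)

Variables (eta gamma : R).
Hypotheses (Hdom : shift_dominates px py e eta) (Hgamma : eta <= gamma).

Definition event_mass (a b : nat) : R :=
  if Rlt_dec (ln (/ px a) - ln (/ py b)) (- gamma) then shifted_coupling a b else 0.

(* On the direct part [U] lies in [I_k] with [U - e] in [J_m] and [U >= e], so
   [c^x(U) - c^y(U - e)], i.e. the information difference, is at least [-eta]. *)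
Lemma event_avoids_direct (a b : nat) : 0 < px a -> 0 < py b ->
  ln (/ px a) - ln (/ py b) < - gamma ->
  direct_part (position Lx zx a) (position Ly zy b) = 0.
Proof.
  intros Ha Hb Hev. set (k := position Lx zx a). set (m := position Ly zy b).
  destruct (Rle_lt_or_eq_dec _ _ (ov_nonneg (X k) (X (S k)) (Y m + e) (Y (S m) + e)))
    as [Hpos|H0]; [exfalso | symmetry; exact H0].
  destruct (ov_pos_point _ _ _ _ Hpos) as [HuX HuY].
  set (u := Rmax (X k) (Y m + e)) in *.
  assert (Cx : cfun px u = ln (/ px a)) by (apply (cfun_at px Lx zx); auto).
  assert (Cy : cfun py (u - e) = ln (/ py b)).
  { apply (cfun_at py Ly zy); auto. fold m. split; lra. }
  assert (Hd : 0 <= u - e < 1 - e).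
  { pose proof (cum_nonneg py Ly zy Hy m). pose proof (cum_le1 px Lx zx Hx SLx (S k)). lra. }
  specialize (Hdom (u - e) Hd). replace (u - e + e) with u in Hdom by ring. lra.
Qed.

Lemma event_mass_le_wrapped (a b : nat) : event_mass a b <= on_support wrapped_part a b.
Proof.
  unfold event_mass, shifted_coupling, on_support.
  destruct Rlt_dec as [Hev|_]; [|repeat destruct Rlt_dec; try lra; apply ov_nonneg].
  destruct (Rlt_dec 0 (px a)) as [Ha|_]; [|lra]. destruct (Rlt_dec 0 (py b)) as [Hb|_]; [|lra].
  rewrite (event_avoids_direct a b Ha Hb Hev). lra.
Qed.

Definition wrapped_row (k : nat) : R := ov (X k) (X (S k)) (e - 1) e.

Definition wrapped_row_of (a : nat) : R :=
  if Rlt_dec 0 (px a) then wrapped_row (position Lx zx a) else 0.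

Lemma event_row_bound (a : nat) (N : nat) : psum (event_mass a) N <= wrapped_row_of a.
Proof.
  apply Rle_trans with (psum (on_support wrapped_part a) N);
    [apply psum_le, event_mass_le_wrapped|].
  unfold wrapped_row_of. destruct (Rlt_dec 0 (px a)) as [Ha|Ha].
  - set (k := position Lx zx a).
    assert (Hvanish : forall m', ~ in_range Ly m' -> wrapped_part k m' = 0).
    { intros m' Hm'. unfold wrapped_part. rewrite (cum_unlisted py Ly zy m' Hm'). apply ov_empty. }
    destruct (relist_dominates (on_support wrapped_part a) Ly zy
                (fun b => on_support_nonneg wrapped_part a b (fun _ _ => ov_nonneg _ _ _ _))
                (on_support_covers_row wrapped_part a) N) as [M HM].
    rewrite (psum_ext (relist (on_support wrapped_part a) Ly zy) (wrapped_part k)) in HM by (intro; apply on_support_row; auto).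
    assert (Hrow : psum (wrapped_part k) M = ov (X k) (X (S k)) (Y 0%nat + (e - 1)) (Y M + (e - 1)))
      by (unfold wrapped_part; apply (ov_tile _ _ (fun m => Y m + (e - 1))), Y_mono_shift).
    pose proof (ov_mono (X k) (X (S k)) (Y 0%nat + (e - 1)) (Y M + (e - 1)) e
                  ltac:(pose proof (cum_le1 py Ly zy Hy SLy M); lra)).
    change (Y 0%nat) with 0 in *. unfold wrapped_row. rewrite Rplus_0_l in *. lra.
  - rewrite (psum_ext _ (fun _ => 0)); [induction N; simpl; lra|].
    intro b. unfold on_support. destruct Rlt_dec; [contradiction | reflexivity].
Qed.

Lemma wrapped_total_bound (N : nat) : psum wrapped_row_of N <= e.
Proof.
  assert (Hw : forall a, 0 <= wrapped_row_of a).
  { intro a. unfold wrapped_row_of. destruct Rlt_dec; [apply ov_nonneg | lra]. }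
  destruct (relist_dominates wrapped_row_of Lx zx Hw) with N as [M HM].
  { intros a Ha. apply (listing_covers px Lx zx Hx SLx). unfold wrapped_row_of in Ha.
    destruct (Rlt_dec 0 (px a)); [lra | now elim Ha]. }
  assert (Hle : psum (relist wrapped_row_of Lx zx) M <= psum wrapped_row M).
  { apply psum_le. intro k. unfold relist. destruct (in_rangeb Lx k) eqn:E.
    - apply in_rangeb_spec in E. unfold wrapped_row_of.
      destruct Rlt_dec as [_|H]; [|pose proof (proj1 SLx k E); contradiction].
      rewrite (position_listed px Lx zx SLx k E). lra.
    - apply ov_nonneg. }
  unfold wrapped_row in Hle. rewrite (ov_tile_left X) in Hle by apply (cum_mono px Lx zx Hx).
  pose proof (ov_wrap_bound (X M) e ltac:(lra)). change (X 0%nat) with 0 in Hle. lra.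
Qed.

Theorem event_bound : exists s, event_prob px py shifted_coupling gamma s /\ s <= e.
Proof.
  assert (Hnn : forall a b, 0 <= event_mass a b).
  { intros a b. unfold event_mass. destruct Rlt_dec; [apply shifted_coupling_nonneg | lra]. }
  destruct (choice (fun a r => infinite_sum (event_mass a) r /\ r <= wrapped_row_of a))
    as [r Hr].
  { intro a. apply bounded_series_sum; [apply Hnn | apply event_row_bound]. }
  destruct (bounded_series_sum r e) as [s [Hs Hse]].
  - intro a. apply (sum_nonneg (event_mass a)); [apply Hnn | apply Hr].
  - intro N. apply Rle_trans with (psum wrapped_row_of N);
      [apply psum_le; intro; apply Hr | apply wrapped_total_bound].
  - exists s. split; auto. exists r. split; auto. intro a. apply Hr.
Qed.

End ShiftedCoupling.

(** * Choosing the shift: a diagonal argument *)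

Fixpoint running_max (N : nat -> nat) (k : nat) : nat :=
  match k with O => N O | S k' => Nat.max (running_max N k') (N (S k')) end.

Lemma running_max_ge (N : nat -> nat) (k : nat) : (N k <= running_max N k)%nat.
Proof. destruct k; simpl; lia. Qed.

Lemma running_max_mono (N : nat -> nat) (i j : nat) : (i <= j)%nat ->
  (running_max N i <= running_max N j)%nat.
Proof. intro H; induction H; simpl; lia. Qed.

Fixpoint last_reached (M : nat -> nat) (n j : nat) : nat :=
  match j with
  | O => O
  | S j' => if Nat.leb (M (S j')) n then S j' else last_reached M n j'
  end.

Lemma last_reached_ok (M : nat -> nat) (n j : nat) : (M 0%nat <= n)%nat ->
  (M (last_reached M n j) <= n)%nat.
Proof.
  intro H0. induction j; simpl; auto.
  destruct (Nat.leb (M (S j)) n) eqn:E; auto. apply Nat.leb_le; auto.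
Qed.

Lemma last_reached_ge (M : nat -> nat) (n j j' : nat) : (j' <= j)%nat -> (M j' <= n)%nat ->
  (j' <= last_reached M n j)%nat.
Proof.
  induction j; intros H1 H2; simpl; [lia|].
  destruct (Nat.leb (M (S j)) n) eqn:E; [lia|].
  apply Nat.leb_gt in E. assert (j' <> S j) by (intro; subst; lia). apply IHj; auto; lia.
Qed.

Lemma diagonal_levels (N : nat -> nat) : exists K : nat -> nat,
  forall j, exists n0, forall n, (n0 <= n)%nat -> (j <= K n)%nat /\ (N (K n) <= n)%nat.
Proof.
  exists (fun n => last_reached (running_max N) n n). intro j.
  exists (Nat.max j (running_max N j)). intros n Hn. split.
  - apply last_reached_ge; lia.
  - eapply Nat.le_trans; [apply running_max_ge|]. apply last_reached_ok.
    pose proof (running_max_mono N 0 j ltac:(lia)). lia.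
Qed.

(* The scales [1 / (k + 2)] used both for the shift and for the slack. *)
Definition scale (k : nat) : R := / (INR k + 2).

Lemma scale_bounds (k : nat) : 0 < scale k < 1.
Proof.
  unfold scale. pose proof (pos_INR k). split; [apply Rinv_0_lt_compat; lra|].
  rewrite <- Rinv_1. apply Rinv_lt_contravar; lra.
Qed.

Lemma scale_anti (j k : nat) : (j <= k)%nat -> scale k <= scale j.
Proof.
  intro H. unfold scale. pose proof (pos_INR j). apply le_INR in H.
  apply Rinv_le_contravar; lra.
Qed.

Lemma scale_small (c : R) : 0 < c -> exists j, scale j <= c.
Proof.
  intro Hc. destruct (archimed_cor1 c Hc) as [j [Hj Hj0]]. exists j.
  apply lt_0_INR in Hj0. unfold scale.
  assert (/ (INR j + 2) <= / INR j) by (apply Rinv_le_contravar; lra). lra.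
Qed.

Theorem lemma8 (PX PY : nat -> nat -> R)
  (hX : forall n, is_pmf (PX n)) (hY : forall n, is_pmf (PY n))
  (hyp : forall eps, 0 < eps < 1 ->
     (* liminf_n inf_{0<=delta<1-eps} (c_n^x(delta+eps) - c_n^y(delta)) >= 0 *)
     forall eta, 0 < eta -> exists N, forall n, (N <= n)%nat ->
       forall delta, 0 <= delta < 1 - eps ->
         cfun (PX n) (delta + eps) - cfun (PY n) delta >= - eta) :
  exists Q : nat -> nat -> nat -> R,
    (forall n, is_coupling (PX n) (PY n) (Q n)) /\
    forall gamma, 0 < gamma ->
      forall e, 0 < e -> exists N, forall n, (N <= n)%nat ->
        exists s, event_prob (PX n) (PY n) (Q n) gamma s /\ s <= e.
Proof.
  destruct (choice (fun n lz => sorted_listing (PX n) (fst lz) (snd lz))) as [lx Hlx].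
  { intro n. destruct (listing_exists (PX n) (hX n)) as [L [z H]]. exists (L, z); exact H. }
  destruct (choice (fun n lz => sorted_listing (PY n) (fst lz) (snd lz))) as [ly Hly].
  { intro n. destruct (listing_exists (PY n) (hY n)) as [L [z H]]. exists (L, z); exact H. }
  (* Thresholds beyond which the hypothesis holds at scale [scale k], and a level
     [K n] tending to infinity that respects them. *)
  destruct (choice (fun k N => forall n, (N <= n)%nat ->
                      shift_dominates (PX n) (PY n) (scale k) (scale k))) as [Nk HNk].
  { intro k. exact (hyp (scale k) (scale_bounds k) (scale k) (proj1 (scale_bounds k))). }
  destruct (diagonal_levels Nk) as [K HK].
  exists (fun n => shifted_coupling (PX n) (PY n) (fst (lx n)) (fst (ly n))
                     (snd (lx n)) (snd (ly n)) (scale (K n))).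
  split.
  - intro n. apply shifted_coupling_is_coupling; auto. apply scale_bounds.
  - intros gamma Hgamma e He.
    destruct (scale_small (Rmin gamma e)) as [j Hj]; [apply Rmin_glb_lt; auto|].
    destruct (HK j) as [n0 Hn0]. exists n0. intros n Hn.
    destruct (Hn0 n Hn) as [HjK HNK].
    pose proof (scale_anti j (K n) HjK). pose proof (Rmin_l gamma e). pose proof (Rmin_r gamma e).
    destruct (event_bound (PX n) (PY n) (fst (lx n)) (fst (ly n)) (snd (lx n)) (snd (ly n))
                (scale (K n)) (hX n) (hY n) (Hlx n) (Hly n) (scale_bounds (K n))
                (scale (K n)) gamma (HNk (K n) n HNK) ltac:(lra)) as [s [Hs Hse]].
    exists s. split; [exact Hs | lra].
Qed.
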